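(* Let $A$ be a semilattice of groups and $G$ a group. For any admissible extension $A\overset{i}{\to}U\overset{j}{\to}G$ of $A$ by $G$ there exists a twisted partial action $\Theta$ of $G$ on $A$ such that $U$ is equivalent (as an extension of $A$ by $G$) to the crossed product $A*_\Theta G$, regarded as an extension of $A$ by $G$ via $a\mapsto a\delta_1$ and $a\delta_x\mapsto x$.
   Context: A semilattice of groups is an inverse semigroup $A$ whose idempotents are central; for $e\in E(A)$ let $A_e=\{a\in A: aa^{-1}=a^{-1}a=e\}$, so $A=\bigsqcup_{e\in E(A)}A_e$. For an inverse semigroup $S$, $\le$ is the natural partial order, $\sigma$ the minimum group congruence ($(s,t)\in\sigma$ iff $es=et$ for some $e\in E(S)$), $S$ is $E$-unitary if $e\le s$, $e\in E(S)$ imply $s\in E(S)$. An extension of $A$ by an inverse semigroup $S$ (Lausch) is an inverse semigroup $U$ with a monomorphism $i:A\to U$ and an idempotent-separating epimorphism $\pi:U\to S$ with $i(A)=\pi^{-1}(E(S))$. A transversal of $\pi$ is a map $\rho:S\to U$ with $\pi\circ\rho=\mathrm{id}_S$ and $\rho(E(S))\subseteq E(U)$; it is order-preserving if $s\le t$ implies $\rho(s)\le\rho(t)$. An extension of $A$ by a group $G$ is an inverse semigroup $U$ with a monomorphism $i:A\to U$ and an epimorphism $j:U\to G$ with $i(A)=j^{-1}(1)$. Two such extensions $(U,i,j)$, $(U',i',j')$ are equivalent if there is an isomorphism $\mu:U\to U'$ with $\mu\circ i=i'$ and $j'\circ\mu=j$. The extension is admissible if there exist an inverse semigroup $S$ and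 epimorphisms $\pi:U\to S$, $\kappa:S\to G$ such that $A\overset{i}{\to}U\overset{\pi}{\to}S$ is an extension of $A$ by $S$, $j=\kappa\circ\pi$, and $\pi$ has an order-preserving transversal. A multiplier of a semigroup $T$ is a pair $(L,R)$ of maps $T\to T$ with $L(st)=L(s)t$, $R(st)=sR(t)$, $sL(t)=R(s)t$; one writes $ws=L(s)$, $sw=R(s)$ for $w=(L,R)$. Multipliers form a monoid $\mathcal M(T)$ with $(L,R)(L',R')=(L\circ L',R'\circ R)$; $\mathcal U(\mathcal M(T))$ is its unit group. A twisted partial action of a group $G$ on a semigroup $T$ is a pair $\Theta=(\theta,w)$, where $\theta=\{\theta_x:D_{x^{-1}}\to D_x\}_{x\in G}$ are isomorphisms between nonempty ideals of $T$ and $w=\{w_{x,y}\in\mathcal U(\mathcal M(D_xD_{xy}))\}_{x,y\in G}$, such that: (i) $D_x^2=D_x$, $D_xD_y=D_yD_x$; (ii) $D_1=T$, $\theta_1=\mathrm{id}_T$; (iii) $\theta_x(D_{x^{-1}}D_y)=D_xD_{xy}$; (iv) $\theta_x(\theta_y(s))=w_{x,y}\theta_{xy}(s)w_{x,y}^{-1}$ for $s\in D_{y^{-1}}D_{y^{-1}x^{-1}}$; (v) $w_{1,x}$ and $w_{x,1}$ are the identity multiplier of $D_x$; (vi) $\theta_x(sw_{y,z})w_{x,yz}=\theta_x(s)w_{x,y}w_{xy,z}$ for $s\in D_{x^{-1}}D_yD_{yz}$. The crossed product is $T*_\Theta G=\{s\delta_x: x\in G, s\in D_x\}$ with product $s\delta_x\cdot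 t\delta_y=\theta_x(\theta_x^{-1}(s)t)w_{x,y}\delta_{xy}$ (an associative semigroup; an inverse semigroup when $T$ is inverse). *)

Set Implicit Arguments.
Unset Strict Implicit.

(* The inverse is
   carried as data; uniqueness is an axiom, so it is determined. *)
Record InvSemigroup := {
  car :> Type;
  smul : car -> car -> car;
  sinv : car -> car;
  smul_assoc : forall a b c, smul a (smul b c) = smul (smul a b) c;
  sinv_l : forall a, smul (smul a (sinv a)) a = a;
  sinv_r : forall a, smul (smul (sinv a) a) (sinv a) = sinv a;
  sinv_uniq : forall a b, smul (smul a b) a = a -> smul (smul b a) b = b ->
                          b = sinv a
}.

Record Group := {
  gcar :> Type;
  gmul : gcar -> gcar -> gcar;
  gone : gcar;
  ginv : gcar -> gcar;
  gmul_assoc : forall x y z, gmul x (gmul y z) = gmul (gmul x y) z;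
  gmul_1l : forall x, gmul gone x = x;
  gmul_1r : forall x, gmul x gone = x;
  gmul_Vl : forall x, gmul (ginv x) x = gone;
  gmul_Vr : forall x, gmul x (ginv x) = gone
}.

Definition is_idem (S : InvSemigroup) (e : S) : Prop := smul e e = e.

Definition semilattice_of_groups (A : InvSemigroup) : Prop :=
  forall e a : A, is_idem e -> smul e a = smul a e.

Definition nat_le (S : InvSemigroup) (s t : S) : Prop :=
  exists e : S, is_idem e /\ s = smul e t.

Definition is_hom (S T : InvSemigroup) (f : S -> T) : Prop :=
  forall a b, f (smul a b) = smul (f a) (f b).

Definition is_ghom (S : InvSemigroup) (G : Group) (f : S -> G) : Prop :=
  forall a b, f (smul a b) = gmul (f a) (f b).

Definition injective (X Y : Type) (f : X -> Y) : Prop :=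
  forall a b, f a = f b -> a = b.

Definition surjective (X Y : Type) (f : X -> Y) : Prop :=
  forall y, exists x, f x = y.

Definition idempotent_separating (S T : InvSemigroup) (f : S -> T) : Prop :=
  forall e e' : S, is_idem e -> is_idem e' -> f e = f e' -> e = e'.

Definition is_extension (A U S : InvSemigroup) (i : A -> U) (pi : U -> S)
  : Prop :=
  (is_hom i /\ injective i) /\
  (is_hom pi /\ surjective pi /\ idempotent_separating pi) /\
  (forall u : U, (exists a, u = i a) <-> is_idem (pi u)).

Definition is_group_extension (A U : InvSemigroup) (G : Group)
  (i : A -> U) (j : U -> G) : Prop :=
  (is_hom i /\ injective i) /\
  (is_ghom j /\ surjective j) /\
  (forall u : U, (exists a, u = i a) <-> j u = gone G).

Definition order_preserving_transversal (S U : InvSemigroup)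
  (pi : U -> S) (rho : S -> U) : Prop :=
  (forall s, pi (rho s) = s) /\
  (forall s, is_idem s -> is_idem (rho s)) /\
  (forall s t, nat_le s t -> nat_le (rho s) (rho t)).

Definition admissible (A U : InvSemigroup) (G : Group)
  (i : A -> U) (j : U -> G) : Prop :=
  exists (S : InvSemigroup) (pi : U -> S) (kappa : S -> G),
    is_extension i pi /\
    (is_ghom kappa /\ surjective kappa) /\
    (forall u, j u = kappa (pi u)) /\
    exists rho : S -> U, order_preserving_transversal pi rho.

Definition setprod (T : InvSemigroup) (P Q : T -> Prop) : T -> Prop :=
  fun c => exists a b, P a /\ Q b /\ c = smul a b.

Definition set_eq (T : Type) (P Q : T -> Prop) : Prop :=
  forall c, P c <-> Q c.

Definition is_ideal (T : InvSemigroup) (P : T -> Prop) : Prop :=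
  (exists a, P a) /\ (forall a b, P a -> P (smul a b) /\ P (smul b a)).

(* (L,R) is a multiplier of the subsemigroup I: w s = L s, s w = R s *)
Definition is_multiplier (T : InvSemigroup) (I : T -> Prop) (L R : T -> T)
  : Prop :=
  (forall s, I s -> I (L s) /\ I (R s)) /\
  (forall s t, I s -> I t ->
     L (smul s t) = smul (L s) t /\
     R (smul s t) = smul s (R t) /\
     smul s (L t) = smul (R s) t).

(* (L,R) is a unit of M(I) with inverse (L',R'); product
   (L,R)(L',R') = (L o L', R' o R), identity (id,id). *)
Definition is_unit_multiplier (T : InvSemigroup) (I : T -> Prop)
  (L R L' R' : T -> T) : Prop :=
  is_multiplier I L R /\ is_multiplier I L' R' /\
  (forall s, I s -> L (L' s) = s /\ R' (R s) = s /\
                    L' (L s) = s /\ R (R' s) = s).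

(* theta x : D_{x^{-1}} -> D_x, with inverse map thetainv x : D_x -> D_{x^{-1}};
   w_{x,y} = (wL x y, wR x y) with inverse multiplier (wiL x y, wiR x y). *)
Record TwistedPartialAction (G : Group) (T : InvSemigroup) := {
  D : G -> T -> Prop;
  theta : G -> T -> T;
  thetainv : G -> T -> T;
  wL : G -> G -> T -> T;
  wR : G -> G -> T -> T;
  wiL : G -> G -> T -> T;
  wiR : G -> G -> T -> T;
  D_ideal : forall x, is_ideal (D x);
  D_sq : forall x, set_eq (setprod (D x) (D x)) (D x);
  D_comm : forall x y, set_eq (setprod (D x) (D y)) (setprod (D y) (D x));
  D_one : forall a, D (gone G) a;
  theta_one : forall a, theta (gone G) a = a;
  theta_maps : forall x a, D (ginv x) a -> D x (theta x a);
  thetainv_maps : forall x a, D x a -> D (ginv x) (thetainv x a);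
  theta_K : forall x a, D (ginv x) a -> thetainv x (theta x a) = a;
  thetainv_K : forall x a, D x a -> theta x (thetainv x a) = a;
  theta_mul : forall x a b, D (ginv x) a -> D (ginv x) b ->
                theta x (smul a b) = smul (theta x a) (theta x b);
  theta_img : forall x y,
    set_eq (fun c => exists a, setprod (D (ginv x)) (D y) a /\ c = theta x a)
           (setprod (D x) (D (gmul x y)));
  w_unit : forall x y, is_unit_multiplier (setprod (D x) (D (gmul x y)))
                         (wL x y) (wR x y) (wiL x y) (wiR x y);
  (* (iv): theta_x(theta_y s) = w_{x,y} theta_{xy}(s) w_{x,y}^{-1} *)
  theta_comp : forall x y s,
    setprod (D (ginv y)) (D (gmul (ginv y) (ginv x))) s ->
    theta x (theta y s) = wiR x y (wL x y (theta (gmul x y) s));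
  w_1x : forall x a, D x a -> wL (gone G) x a = a /\ wR (gone G) x a = a;
  w_x1 : forall x a, D x a -> wL x (gone G) a = a /\ wR x (gone G) a = a;
  (* (vi): theta_x(s w_{y,z}) w_{x,yz} = theta_x(s) w_{x,y} w_{xy,z} *)
  cocycle : forall x y z s,
    setprod (setprod (D (ginv x)) (D y)) (D (gmul y z)) s ->
    wR x (gmul y z) (theta x (wR y z s)) =
    wR (gmul x y) z (wR x y (theta x s))
}.

(* Crossed product T *_Theta G, represented inside T * G as the pairs (s,x)
   with s in D_x (s delta_x); its product:
   s d_x . t d_y = theta_x(theta_x^{-1}(s) t) w_{x,y} d_{xy}. *)
Definition in_crossed_product (G : Group) (T : InvSemigroup)
  (Th : TwistedPartialAction G T) (p : T * G) : Prop :=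
  D Th (snd p) (fst p).

Definition cp_mul (G : Group) (T : InvSemigroup)
  (Th : TwistedPartialAction G T) (p q : T * G) : T * G :=
  let (s, x) := p in let (t, y) := q in
  (wR Th x y (theta Th x (smul (thetainv Th x s) t)), gmul x y).

(* U is equivalent, as an extension of A by G, to A *_Theta G with
   i'(a) = a d_1 and j'(a d_x) = x: an isomorphism mu : U -> A *_Theta G
   with mu o i = i' and j' o mu = j. *)
Definition equivalent_to_crossed_product (A U : InvSemigroup) (G : Group)
  (i : A -> U) (j : U -> G) (Th : TwistedPartialAction G A) : Prop :=
  exists mu : U -> A * G,
    injective mu /\
    (forall p, (exists u, mu u = p) <-> in_crossed_product Th p) /\
    (forall u v, mu (smul u v) = cp_mul Th (mu u) (mu v)) /\
    (forall a, mu (i a) = (a, gone G)) /\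
    (forall u, snd (mu u) = j u).

(* The order-preserving transversal [ρ] of [π : U → S] attaches to every [u] a
   companion [N u = ρ(π u)] over the same element [j u] of [G], with the same
   domain and range as [u].  As [π] separates idempotents, [N u] depends only on
   [j u] and [u u⁻], so for each [x] and each idempotent [e] that is the range
   (resp. domain) of some element over [x] there is a canonical such element;
   order preservation gives [N (e u) = e N(u)] for idempotents [e].  Let [D_x] be
   the [a ∈ A] whose range is the range of an element over [x], let [θ_x]
   conjugate [a] by the canonical element over [x] with domain [a a⁻], and let
   [w_{x,y}] compare the product of the canonical elements over [x] and [y] with
   the canonical element over [x y].  The compatibility [N (e u) = e N(u)] makes
   [θ_x] multiplicative and [w_{x,y}] a unit multiplier, and
   [u ↦ (u N(u)⁻) δ_{j u}] is an isomorphism of extensions [U ≅ A ∗_Θ G]. *)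

From Pilot Require Import Defs.
From Stdlib Require Import ClassicalEpsilon Setoid.

Set Implicit Arguments.
Unset Strict Implicit.

Notation "x ⋅ y" := (smul x y) (at level 40, left associativity).
Notation "x ⁻" := (sinv x) (at level 2, left associativity, format "x ⁻").

Ltac assoc := repeat rewrite smul_assoc.
Ltac areflexivity := assoc; reflexivity.

(* Rewriting modulo associativity: after left-association, an occurrence of the
   left-hand side [L] of [H] inside a product is either a prefix or of the form
   [p ⋅ L], so [H] is tried in both shapes. *)
Ltac arewrite H :=
  let H1 := fresh "H1" in let H2 := fresh "H2" in
  pose proof H as H1; repeat rewrite smul_assoc in H1;
  match type of H1 with ?L = ?R =>
    assert (H2 : forall p, p ⋅ L = p ⋅ R)
      by (let p := fresh in intro p; rewrite H1; reflexivity)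
  end;
  repeat setoid_rewrite smul_assoc in H2;
  assoc; first [rewrite H2 | rewrite H1]; clear H1 H2.

Ltac aexact H :=
  let H1 := fresh "H1" in
  pose proof H as H1; repeat rewrite smul_assoc in H1; assoc; exact H1.

(** * Inverse semigroups and groups *)

Section InverseSemigroup.
Variable S : InvSemigroup.
Implicit Types a b e f : S.

Lemma sinv_idem e : e ⋅ e = e -> e⁻ = e.
Proof. intro He. symmetry. apply sinv_uniq; rewrite !He; reflexivity. Qed.

Lemma sinvK a : a⁻⁻ = a.
Proof. symmetry. apply sinv_uniq; [apply sinv_r | apply sinv_l]. Qed.

Lemma rinv_idem a : a ⋅ a⁻ ⋅ (a ⋅ a⁻) = a ⋅ a⁻.
Proof. arewrite (sinv_l a). reflexivity. Qed.

Lemma linv_idem a : a⁻ ⋅ a ⋅ (a⁻ ⋅ a) = a⁻ ⋅ a.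
Proof. arewrite (sinv_r a). reflexivity. Qed.

(* The inverse of [e ⋅ f] is the idempotent [f ⋅ (e ⋅ f)⁻ ⋅ e]; uniqueness of
   inverses then makes [e ⋅ f] and [f ⋅ e] both equal to [(e ⋅ f)⁻]. *)
Lemma idem_mul_idem e f : e ⋅ e = e -> f ⋅ f = f -> e ⋅ f ⋅ (e ⋅ f) = e ⋅ f.
Proof.
  intros He Hf. set (x := (e ⋅ f)⁻).
  pose proof (sinv_l (e ⋅ f)) as Hl. pose proof (sinv_r (e ⋅ f)) as Hr. fold x in Hl, Hr.
  assert (Hx : f ⋅ x ⋅ e = x).
  { apply sinv_uniq.
    - arewrite He. arewrite Hf. arewrite Hl. reflexivity.
    - arewrite He. arewrite Hf. arewrite Hr. reflexivity. }
  assert (Hxx : x ⋅ x = x).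
  { rewrite <- Hx at 1. rewrite <- Hx at 2. arewrite Hr. exact Hx. }
  assert (Hef : e ⋅ f = x) by (rewrite <- (sinv_idem Hxx); symmetry; apply sinvK).
  rewrite Hef. exact Hxx.
Qed.

Lemma idem_comm e f : e ⋅ e = e -> f ⋅ f = f -> e ⋅ f = f ⋅ e.
Proof.
  intros He Hf.
  pose proof (idem_mul_idem He Hf) as Hef. pose proof (idem_mul_idem Hf He) as Hfe.
  transitivity ((e ⋅ f)⁻).
  - symmetry. apply sinv_idem, Hef.
  - symmetry. apply sinv_uniq.
    + arewrite Hf. arewrite He. aexact Hef.
    + arewrite He. arewrite Hf. aexact Hfe.
Qed.

Lemma sinvM a b : (a ⋅ b)⁻ = b⁻ ⋅ a⁻.
Proof.
  symmetry. apply sinv_uniq.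
  - arewrite (idem_comm (rinv_idem b) (linv_idem a)).
    arewrite (sinv_l a). arewrite (sinv_l b). reflexivity.
  - arewrite (idem_comm (linv_idem a) (rinv_idem b)).
    arewrite (sinv_r b). arewrite (sinv_r a). reflexivity.
Qed.

Lemma conj_idem a e : e ⋅ e = e -> a ⋅ e ⋅ a⁻ ⋅ (a ⋅ e ⋅ a⁻) = a ⋅ e ⋅ a⁻.
Proof.
  intro He. arewrite (idem_comm He (linv_idem a)). arewrite He. arewrite (sinv_l a).
  reflexivity.
Qed.

Lemma semilattice_of_groups_rinv_linv a :
  semilattice_of_groups S -> a ⋅ a⁻ = a⁻ ⋅ a.
Proof.
  intro Hc.
  assert (E1 : a ⋅ a⁻ = a⁻ ⋅ a ⋅ (a ⋅ a⁻)).
  { rewrite <- (sinv_l a) at 1. rewrite <- (smul_assoc a a⁻ a).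
    rewrite <- (Hc _ a (linv_idem a)). areflexivity. }
  assert (E2 : a⁻ ⋅ a = a ⋅ a⁻ ⋅ (a⁻ ⋅ a)).
  { rewrite <- (sinv_l a) at 2. rewrite (smul_assoc a⁻ (a ⋅ a⁻) a).
    rewrite <- (Hc _ a⁻ (rinv_idem a)). areflexivity. }
  rewrite E1, (idem_comm (linv_idem a) (rinv_idem a)). symmetry. exact E2.
Qed.

End InverseSemigroup.

Lemma hom_sinv (S T : InvSemigroup) (f : S -> T) :
  is_hom f -> forall a, f (a⁻) = (f a)⁻.
Proof.
  intros Hf a. apply sinv_uniq; rewrite <- !Hf; [rewrite sinv_l | rewrite sinv_r]; reflexivity.
Qed.

Section Groups.
Variable G : Group.

Lemma ginv_unique (x y : G) : gmul (gmul x y) x = x -> y = ginv x.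
Proof.
  intro H.
  assert (E : y = gmul (gmul (ginv x) (gmul (gmul x y) x)) (ginv x)).
  { rewrite !gmul_assoc, gmul_Vl, gmul_1l, <- !gmul_assoc, gmul_Vr, gmul_1r. reflexivity. }
  rewrite H, <- gmul_assoc, gmul_Vr, gmul_1r in E. exact E.
Qed.

Lemma ginvM (x y : G) : ginv (gmul x y) = gmul (ginv y) (ginv x).
Proof.
  symmetry. apply ginv_unique.
  rewrite <- !gmul_assoc, (gmul_assoc (ginv x) x), gmul_Vl, gmul_1l,
    (gmul_assoc y (ginv y)), gmul_Vr, gmul_1l.
  reflexivity.
Qed.

Lemma ginvK (x : G) : ginv (ginv x) = x.
Proof. symmetry. apply ginv_unique. rewrite gmul_Vl, gmul_1l. reflexivity. Qed.

Lemma ginv1 : ginv (gone G) = gone G.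
Proof. symmetry. apply ginv_unique. rewrite !gmul_1l. reflexivity. Qed.

Lemma gmulVKr (x y : G) : gmul (gmul x y) (ginv y) = x.
Proof. rewrite <- gmul_assoc, gmul_Vr, gmul_1r. reflexivity. Qed.

End Groups.

Lemma ghom_sinv (S : InvSemigroup) (G : Group) (f : S -> G) :
  is_ghom f -> forall a, f (a⁻) = ginv (f a).
Proof. intros Hf a. apply ginv_unique. rewrite <- !Hf, sinv_l. reflexivity. Qed.

Lemma ghom_idem (S : InvSemigroup) (G : Group) (f : S -> G) :
  is_ghom f -> forall e, e ⋅ e = e -> f e = gone G.
Proof.
  intros Hf e He.
  assert (H : gmul (f e) (f e) = f e) by (rewrite <- Hf, He; reflexivity).
  transitivity (gmul (ginv (f e)) (gmul (f e) (f e))).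
  - rewrite gmul_assoc, gmul_Vl, gmul_1l. reflexivity.
  - rewrite H. apply gmul_Vl.
Qed.

Section Extension.
Variables (A U S : InvSemigroup) (G : Group).
Variables (i : A -> U) (j : U -> G) (pi : U -> S) (kappa : S -> G) (rho : S -> U).
Hypothesis HA : semilattice_of_groups A.
Hypothesis A_inhabited : inhabited A.
Hypothesis Hi : is_hom i.
Hypothesis Hi_inj : injective i.
Hypothesis Hj : is_ghom j.
Hypothesis Hj_surj : surjective j.
Hypothesis Hj_ker : forall u, (exists a, u = i a) <-> j u = gone G.
Hypothesis Hpi : is_hom pi.
Hypothesis Hpi_sep : idempotent_separating pi.
Hypothesis Hpi_ker : forall u, (exists a, u = i a) <-> is_idem (pi u).
Hypothesis Hj_pi : forall u, j u = kappa (pi u).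
Hypothesis Hrho_sec : forall s, pi (rho s) = s.
Hypothesis Hrho_idem : forall s, is_idem s -> is_idem (rho s).
Hypothesis Hrho_le : forall s t, nat_le s t -> nat_le (rho s) (rho t).

Notation "1" := (gone G).
Notation "x * y" := (gmul x y).

Definition inA (u : U) : Prop := j u = 1.

Lemma inA_image u : inA u -> exists a, u = i a.
Proof. apply Hj_ker. Qed.

Lemma inA_i a : inA (i a).
Proof. apply Hj_ker. eauto. Qed.

Lemma inA_idem e : e ⋅ e = e -> inA e.
Proof. apply (ghom_idem Hj). Qed.

Lemma j_sinv u : j (u⁻) = ginv (j u).
Proof. apply (ghom_sinv Hj). Qed.

Lemma inA_mul u v : inA u -> inA v -> inA (u ⋅ v).
Proof. unfold inA. intros Hu Hv. rewrite Hj, Hu, Hv, gmul_1l. reflexivity. Qed.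

Lemma inA_sinv u : inA u -> inA (u⁻).
Proof. unfold inA. intro Hu. rewrite j_sinv, Hu, ginv1. reflexivity. Qed.

Lemma inA_conj u v : inA v -> inA (u ⋅ v ⋅ u⁻).
Proof. unfold inA. intro Hv. rewrite !Hj, Hv, j_sinv, gmul_1r, gmul_Vr. reflexivity. Qed.

Lemma inA_conjV u v : inA v -> inA (u⁻ ⋅ v ⋅ u).
Proof. unfold inA. intro Hv. rewrite !Hj, Hv, j_sinv, gmul_1r, gmul_Vl. reflexivity. Qed.

Lemma inA_central u e : inA u -> e ⋅ e = e -> e ⋅ u = u ⋅ e.
Proof.
  intros Hu He. destruct (inA_image Hu) as [a ->].
  destruct (inA_image (inA_idem He)) as [b ->].
  assert (Hb : b ⋅ b = b) by (apply Hi_inj; rewrite Hi; exact He).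
  rewrite <- !Hi, HA; [reflexivity | exact Hb].
Qed.

Lemma inA_rinv_linv u : inA u -> u ⋅ u⁻ = u⁻ ⋅ u.
Proof.
  intro Hu. destruct (inA_image Hu) as [a ->].
  rewrite <- (hom_sinv Hi), <- !Hi, (semilattice_of_groups_rinv_linv a HA). reflexivity.
Qed.

Lemma inA_mul_rinv u : inA u -> u ⋅ (u ⋅ u⁻) = u.
Proof. intro Hu. rewrite (inA_rinv_linv Hu), smul_assoc. apply sinv_l. Qed.

Lemma rinv_mul_inA u v : inA u -> inA v -> u ⋅ v ⋅ (u ⋅ v)⁻ = v ⋅ v⁻ ⋅ (u ⋅ u⁻).
Proof.
  intros Hu Hv. rewrite sinvM. transitivity (u ⋅ (v ⋅ v⁻) ⋅ u⁻); [areflexivity|].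
  rewrite <- (inA_central Hu (rinv_idem v)). areflexivity.
Qed.

Definition iinv (u : U) : A :=
  epsilon A_inhabited (fun a => i a = u).

Lemma iinvK u : inA u -> i (iinv u) = u.
Proof.
  intro Hu. destruct (inA_image Hu) as [a Ha].
  apply (epsilon_spec A_inhabited (fun a => i a = u)). eauto.
Qed.

Lemma iinv_i a : iinv (i a) = a.
Proof. apply Hi_inj, iinvK, inA_i. Qed.

(** * Canonical elements *)

Definition N (u : U) : U := rho (pi u).

Lemma pi_N u : pi (N u) = pi u.
Proof. apply Hrho_sec. Qed.

Lemma j_N u : j (N u) = j u.
Proof. rewrite !Hj_pi, pi_N. reflexivity. Qed.

Lemma N_N u : N (N u) = N u.
Proof. unfold N at 1. rewrite pi_N. reflexivity. Qed.

Lemma N_rinv u : N u ⋅ (N u)⁻ = u ⋅ u⁻.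
Proof.
  apply Hpi_sep; try apply rinv_idem. rewrite !Hpi, !(hom_sinv Hpi), pi_N. reflexivity.
Qed.

Lemma N_linv u : (N u)⁻ ⋅ N u = u⁻ ⋅ u.
Proof.
  apply Hpi_sep; try apply linv_idem. rewrite !Hpi, !(hom_sinv Hpi), pi_N. reflexivity.
Qed.

Lemma rinv_mul_N u : u ⋅ u⁻ ⋅ N u = N u.
Proof. rewrite <- N_rinv. apply sinv_l. Qed.

Lemma N_mul_linv u : N u ⋅ u⁻ ⋅ u = N u.
Proof. rewrite <- smul_assoc, <- N_linv. assoc. apply sinv_l. Qed.

Lemma linv_mul_sinvN u : u⁻ ⋅ u ⋅ (N u)⁻ = (N u)⁻.
Proof. rewrite <- N_linv. apply sinv_r. Qed.

Lemma sinvN_mul_rinv u : (N u)⁻ ⋅ (u ⋅ u⁻) = (N u)⁻.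
Proof. rewrite <- N_rinv, smul_assoc. apply sinv_r. Qed.

Lemma pi_idem_inA u : inA u -> pi u ⋅ pi u = pi u.
Proof. intro Hu. apply Hpi_ker, Hj_ker, Hu. Qed.

Lemma pi_eq_of_rinv u v : j u = j v -> u ⋅ u⁻ = v ⋅ v⁻ -> pi u = pi v.
Proof.
  intros Hjuv Hr.
  assert (Hpi_inA : forall w w',
            j w = j w' -> pi w⁻ ⋅ pi w' ⋅ (pi w⁻ ⋅ pi w') = pi w⁻ ⋅ pi w').
  { intros w w' Hw. rewrite <- Hpi. apply pi_idem_inA.
    unfold inA. rewrite Hj, j_sinv, Hw, gmul_Vl. reflexivity. }
  pose proof (Hpi_inA u v Hjuv) as Huv. pose proof (Hpi_inA v u (eq_sym Hjuv)) as Hvu.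
  rewrite !(hom_sinv Hpi) in Huv, Hvu.
  assert (Hr' : pi u ⋅ (pi u)⁻ = pi v ⋅ (pi v)⁻)
    by (rewrite <- !(hom_sinv Hpi), <- !Hpi, Hr; reflexivity).
  set (s := pi u) in *. set (t := pi v) in *.
  assert (Es : s = t ⋅ (t⁻ ⋅ s)) by (rewrite <- (sinv_l s) at 1; rewrite Hr'; areflexivity).
  assert (Et : t = s ⋅ (s⁻ ⋅ t))
    by (rewrite <- (sinv_l t) at 1; rewrite <- Hr'; areflexivity).
  assert (Et' : t ⋅ (s⁻ ⋅ t) = t) by (rewrite Et at 1; arewrite Huv; aexact (eq_sym Et)).
  rewrite Es, <- Et' at 1.
  transitivity (t ⋅ (t⁻ ⋅ s ⋅ (s⁻ ⋅ t)));
    [rewrite <- (idem_comm Huv Hvu); areflexivity|].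
  rewrite smul_assoc, <- Es. symmetry. exact Et.
Qed.

Lemma N_eq_of_rinv u v : j u = j v -> u ⋅ u⁻ = v ⋅ v⁻ -> N u = N v.
Proof. intros Hjuv Hr. unfold N. rewrite (pi_eq_of_rinv Hjuv Hr). reflexivity. Qed.

Lemma N_eq_of_linv u v : j u = j v -> u⁻ ⋅ u = v⁻ ⋅ v -> N u = N v.
Proof.
  intros Hjuv Hd. unfold N.
  assert (E : pi (u⁻) = pi (v⁻)).
  { apply pi_eq_of_rinv; [rewrite !j_sinv, Hjuv; reflexivity | rewrite !sinvK; exact Hd]. }
  rewrite !(hom_sinv Hpi) in E. rewrite <- (sinvK (pi u)), E, sinvK. reflexivity.
Qed.

Lemma N_idem e : e ⋅ e = e -> N e = e.
Proof.
  intro He. apply Hpi_sep; [apply Hrho_idem, pi_idem_inA, inA_idem, He | exact He | apply pi_N].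
Qed.

(* Order preservation of [ρ] is used exactly here: [π (e ⋅ u) ≤ π u]. *)
Lemma N_idem_mull e u : e ⋅ e = e -> N (e ⋅ u) = e ⋅ N u.
Proof.
  intro He.
  assert (Hle : nat_le (pi (e ⋅ u)) (pi u)).
  { exists (pi e). split; [unfold is_idem; rewrite <- Hpi, He; reflexivity | apply Hpi]. }
  destruct (Hrho_le Hle) as [g [Hg Heu]]. fold (N (e ⋅ u)) (N u) in Heu. unfold is_idem in Hg.
  assert (R1 : N (e ⋅ u) ⋅ (N (e ⋅ u))⁻ = e ⋅ (u ⋅ u⁻)).
  { rewrite N_rinv, sinvM, (sinv_idem He). arewrite (idem_comm (rinv_idem u) He).
    arewrite He. reflexivity. }
  assert (R2 : N (e ⋅ u) ⋅ (N (e ⋅ u))⁻ = g ⋅ (u ⋅ u⁻)).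
  { rewrite Heu, sinvM, (sinv_idem Hg), <- (N_rinv u).
    arewrite (idem_comm (rinv_idem (N u)) Hg). arewrite Hg. reflexivity. }
  symmetry. rewrite <- (rinv_mul_N u). transitivity (e ⋅ (u ⋅ u⁻) ⋅ N u); [areflexivity|].
  rewrite <- R1, R2. arewrite (rinv_mul_N u). symmetry. exact Heu.
Qed.

Lemma N_idem_mulr e u : e ⋅ e = e -> N (u ⋅ e) = N u ⋅ e.
Proof.
  intro He.
  assert (E : N u ⋅ e = N (N u ⋅ e)).
  { assert (Eq : N u ⋅ e = N u ⋅ e ⋅ (N u)⁻ ⋅ N u).
    { symmetry. arewrite (N_linv u). arewrite (idem_comm He (linv_idem u)).
      arewrite (N_mul_linv u). reflexivity. }
    rewrite Eq, (N_idem_mull _ (conj_idem (N u) He)), N_N. reflexivity. }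
  rewrite E. apply N_eq_of_linv.
  - rewrite !Hj, j_N. reflexivity.
  - rewrite !sinvM, (sinv_idem He). arewrite (N_linv u). reflexivity.
Qed.

Definition Ran (x : G) (e : U) : Prop := exists u, j u = x /\ u ⋅ u⁻ = e.
Definition Dom (x : G) (f : U) : Prop := exists u, j u = x /\ u⁻ ⋅ u = f.

Let U_inhabited : inhabited U :=
  match A_inhabited with inhabits a => inhabits (i a) end.

Definition Nran (x : G) (e : U) : U :=
  N (epsilon U_inhabited (fun u => j u = x /\ u ⋅ u⁻ = e)).
Definition Ndom (x : G) (f : U) : U :=
  N (epsilon U_inhabited (fun u => j u = x /\ u⁻ ⋅ u = f)).

Lemma Nran_eq x e u : j u = x -> u ⋅ u⁻ = e -> Nran x e = N u.
Proof.
  intros Hx He. unfold Nran.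
  destruct (epsilon_spec U_inhabited (fun u => j u = x /\ u ⋅ u⁻ = e)) as [E1 E2];
    [eauto|].
  apply N_eq_of_rinv; congruence.
Qed.

Lemma Ndom_eq x f u : j u = x -> u⁻ ⋅ u = f -> Ndom x f = N u.
Proof.
  intros Hx Hf. unfold Ndom.
  destruct (epsilon_spec U_inhabited (fun u => j u = x /\ u⁻ ⋅ u = f)) as [E1 E2];
    [eauto|].
  apply N_eq_of_linv; congruence.
Qed.

Lemma Nran_of u : Nran (j u) (u ⋅ u⁻) = N u.
Proof. apply Nran_eq; reflexivity. Qed.

Lemma Ndom_of u : Ndom (j u) (u⁻ ⋅ u) = N u.
Proof. apply Ndom_eq; reflexivity. Qed.

Lemma Ran_of u : Ran (j u) (u ⋅ u⁻).
Proof. exists u; auto. Qed.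

Lemma Dom_of u : Dom (j u) (u⁻ ⋅ u).
Proof. exists u; auto. Qed.

Section RanFacts.
Variables (x : G) (e : U).
Hypothesis He : Ran x e.

Lemma Ran_idem : e ⋅ e = e.
Proof. destruct He as [u [_ <-]]. apply rinv_idem. Qed.

Lemma j_Nran : j (Nran x e) = x.
Proof. destruct He as [u [H1 H2]]. rewrite (Nran_eq H1 H2), j_N. exact H1. Qed.

Lemma Nran_rinv : Nran x e ⋅ (Nran x e)⁻ = e.
Proof. destruct He as [u [H1 H2]]. rewrite (Nran_eq H1 H2), N_rinv. exact H2. Qed.

Lemma N_Nran : N (Nran x e) = Nran x e.
Proof. destruct He as [u [H1 H2]]. rewrite (Nran_eq H1 H2), N_N. reflexivity. Qed.

Lemma Ran_mul_Nran : e ⋅ Nran x e = Nran x e.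
Proof. rewrite <- Nran_rinv at 1. apply sinv_l. Qed.

Lemma sinvNran_mul_Ran : (Nran x e)⁻ ⋅ e = (Nran x e)⁻.
Proof. rewrite <- Nran_rinv at 2. rewrite smul_assoc. apply sinv_r. Qed.

End RanFacts.

Section DomFacts.
Variables (x : G) (f : U).
Hypothesis Hf : Dom x f.

Lemma Dom_idem : f ⋅ f = f.
Proof. destruct Hf as [u [_ <-]]. apply linv_idem. Qed.

Lemma j_Ndom : j (Ndom x f) = x.
Proof. destruct Hf as [u [H1 H2]]. rewrite (Ndom_eq H1 H2), j_N. exact H1. Qed.

Lemma Ndom_linv : (Ndom x f)⁻ ⋅ Ndom x f = f.
Proof. destruct Hf as [u [H1 H2]]. rewrite (Ndom_eq H1 H2), N_linv. exact H2. Qed.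

Lemma N_Ndom : N (Ndom x f) = Ndom x f.
Proof. destruct Hf as [u [H1 H2]]. rewrite (Ndom_eq H1 H2), N_N. reflexivity. Qed.

Lemma Ndom_mul_Dom : Ndom x f ⋅ f = Ndom x f.
Proof. rewrite <- Ndom_linv at 2. rewrite smul_assoc. apply sinv_l. Qed.

Lemma Dom_mul_sinvNdom : f ⋅ (Ndom x f)⁻ = (Ndom x f)⁻.
Proof. rewrite <- Ndom_linv at 1. apply sinv_r. Qed.

End DomFacts.

Lemma Ran_Dom x e : Ran x e <-> Dom (ginv x) e.
Proof.
  split; intros [u [H1 H2]]; exists u⁻; rewrite j_sinv, H1, ?ginvK, ?sinvK; auto.
Qed.

Lemma Ran_idem_mull x e f : Ran x e -> f ⋅ f = f -> Ran x (f ⋅ e).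
Proof.
  intros [u [H1 H2]] Hf. exists (f ⋅ u). split.
  - rewrite Hj, (inA_idem Hf), gmul_1l. exact H1.
  - rewrite sinvM, (sinv_idem Hf), <- H2.
    arewrite (idem_comm (rinv_idem u) Hf). arewrite Hf. reflexivity.
Qed.

Lemma Nran_idem_mull x e f : Ran x e -> f ⋅ f = f -> Nran x (f ⋅ e) = f ⋅ Nran x e.
Proof.
  intros HE Hf. rewrite <- (N_Nran HE), <- (N_idem_mull _ Hf).
  apply Nran_eq.
  - rewrite Hj, (j_Nran HE), (inA_idem Hf), gmul_1l. reflexivity.
  - rewrite sinvM, (sinv_idem Hf). arewrite (Nran_rinv HE).
    rewrite <- smul_assoc, (idem_comm (Ran_idem HE) Hf). arewrite Hf. reflexivity.
Qed.

Lemma Ndom_idem_mulr x f e : Dom x f -> e ⋅ e = e -> Ndom x (f ⋅ e) = Ndom x f ⋅ e.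
Proof.
  intros HE He. rewrite <- (N_Ndom HE), <- (N_idem_mulr _ He).
  apply Ndom_eq.
  - rewrite Hj, (j_Ndom HE), (inA_idem He), gmul_1r. reflexivity.
  - rewrite sinvM, (sinv_idem He). arewrite (Ndom_linv HE).
    rewrite (idem_comm He (Dom_idem HE)). arewrite He. reflexivity.
Qed.

Lemma Nran_one e : e ⋅ e = e -> Nran 1 e = e.
Proof.
  intro He. rewrite (Nran_eq (u := e)); [apply N_idem, He | apply inA_idem, He |].
  rewrite (sinv_idem He). exact He.
Qed.

(** * The partial action *)

Definition Dset (x : G) (a : A) : Prop := Ran x (i a ⋅ (i a)⁻).

Lemma Dset_mulr x a b : Dset x a -> Dset x (a ⋅ b).
Proof.
  unfold Dset. intro Ha. rewrite Hi, rinv_mul_inA by apply inA_i.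
  apply Ran_idem_mull; [exact Ha | apply rinv_idem].
Qed.

Lemma Dset_mull x a b : Dset x a -> Dset x (b ⋅ a).
Proof.
  unfold Dset. intro Ha. rewrite Hi, rinv_mul_inA by apply inA_i.
  rewrite (idem_comm (rinv_idem (i a)) (rinv_idem (i b))).
  apply Ran_idem_mull; [exact Ha | apply rinv_idem].
Qed.

Lemma setprod_Dset x y c : setprod (Dset x) (Dset y) c <-> Dset x c /\ Dset y c.
Proof.
  split.
  - intros [a [b [Ha [Hb ->]]]]. split; [apply Dset_mulr | apply Dset_mull]; assumption.
  - intros [Hx Hy]. exists c, (c⁻ ⋅ c). split; [exact Hx|]. split; [apply Dset_mull, Hy|].
    rewrite smul_assoc. symmetry. apply sinv_l.
Qed.

Lemma setprod3_Dset x y z c :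
  setprod (setprod (Dset x) (Dset y)) (Dset z) c <-> Dset x c /\ Dset y c /\ Dset z c.
Proof.
  split.
  - intros [a [b [Ha [Hb ->]]]]. apply setprod_Dset in Ha as [Hx Hy].
    split; [|split]; [apply Dset_mulr | apply Dset_mulr | apply Dset_mull]; assumption.
  - intros [Hx [Hy Hz]]. exists c, (c⁻ ⋅ c). split; [apply setprod_Dset; auto|].
    split; [apply Dset_mull, Hz|]. rewrite smul_assoc. symmetry. apply sinv_l.
Qed.

Lemma Dset_ginv x a : Dset (ginv x) a <-> Dom x (i a ⋅ (i a)⁻).
Proof. unfold Dset. rewrite Ran_Dom, ginvK. reflexivity. Qed.

Lemma Dset_one a : Dset 1 a.
Proof. exists (i a). split; [apply inA_i | reflexivity]. Qed.

Lemma Dset_nonempty x : exists a, Dset x a.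
Proof.
  destruct (Hj_surj x) as [u Hu]. destruct (inA_image (inA_idem (rinv_idem u))) as [a Ha].
  exists a. unfold Dset. rewrite <- Ha, (sinv_idem (rinv_idem u)), (rinv_idem u), <- Hu.
  apply Ran_of.
Qed.

Definition th (x : G) (a : A) : A :=
  iinv (Ndom x (i a ⋅ (i a)⁻) ⋅ i a ⋅ (Ndom x (i a ⋅ (i a)⁻))⁻).
Definition thinv (x : G) (c : A) : A :=
  iinv ((Nran x (i c ⋅ (i c)⁻))⁻ ⋅ i c ⋅ Nran x (i c ⋅ (i c)⁻)).

Lemma theta_i x a :
  i (th x a) = Ndom x (i a ⋅ (i a)⁻) ⋅ i a ⋅ (Ndom x (i a ⋅ (i a)⁻))⁻.
Proof. apply iinvK, inA_conj, inA_i. Qed.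

Lemma thetainv_i x c :
  i (thinv x c) = (Nran x (i c ⋅ (i c)⁻))⁻ ⋅ i c ⋅ Nran x (i c ⋅ (i c)⁻).
Proof. apply iinvK, inA_conjV, inA_i. Qed.

Lemma theta_conj x a P : j P = x -> P⁻ ⋅ P = i a ⋅ (i a)⁻ ->
  i (th x a) = N P ⋅ i a ⋅ (N P)⁻.
Proof. intros HP HPa. rewrite theta_i, (Ndom_eq HP HPa). reflexivity. Qed.

Lemma theta_rinv x a : Dset (ginv x) a ->
  i (th x a) ⋅ (i (th x a))⁻ = Ndom x (i a ⋅ (i a)⁻) ⋅ (Ndom x (i a ⋅ (i a)⁻))⁻.
Proof.
  intro Ha. apply Dset_ginv in Ha.
  rewrite theta_i, !sinvM, sinvK. arewrite (Ndom_linv Ha).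
  arewrite (inA_mul_rinv (inA_i a)). arewrite (Ndom_mul_Dom Ha). reflexivity.
Qed.

Lemma theta_Dset x a : Dset (ginv x) a -> Dset x (th x a).
Proof.
  intro Ha. unfold Dset. rewrite (theta_rinv Ha).
  apply Dset_ginv in Ha. rewrite <- (j_Ndom Ha) at 1. apply Ran_of.
Qed.

Lemma thetainv_rinv x c : Dset x c ->
  i (thinv x c) ⋅ (i (thinv x c))⁻ =
  (Nran x (i c ⋅ (i c)⁻))⁻ ⋅ Nran x (i c ⋅ (i c)⁻).
Proof.
  intro Hc. rewrite thetainv_i, !sinvM, sinvK. arewrite (Nran_rinv Hc).
  arewrite (inA_mul_rinv (inA_i c)). arewrite (sinvNran_mul_Ran Hc). reflexivity.
Qed.

Lemma thetainv_Dset x c : Dset x c -> Dset (ginv x) (thinv x c).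
Proof.
  intro Hc. apply Dset_ginv. rewrite (thetainv_rinv Hc), <- (j_Nran Hc) at 1.
  apply Dom_of.
Qed.

Lemma theta_thetainv x c : Dset x c -> th x (thinv x c) = c.
Proof.
  intro Hc. apply Hi_inj.
  rewrite (theta_i x (thinv x c)), (thetainv_rinv Hc).
  assert (E : Ndom x ((Nran x (i c ⋅ (i c)⁻))⁻ ⋅ Nran x (i c ⋅ (i c)⁻))
              = Nran x (i c ⋅ (i c)⁻)).
  { rewrite <- (j_Nran Hc) at 1. rewrite Ndom_of. apply (N_Nran Hc). }
  rewrite E, thetainv_i.
  arewrite (Nran_rinv Hc). arewrite (Nran_rinv Hc). arewrite (sinv_l (i c)).
  arewrite (inA_mul_rinv (inA_i c)). reflexivity.
Qed.

Lemma thetainv_theta x a : Dset (ginv x) a -> thinv x (th x a) = a.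
Proof.
  intro Ha. pose proof (proj1 (Dset_ginv x a) Ha) as HE. apply Hi_inj.
  rewrite (thetainv_i x (th x a)), (theta_rinv Ha).
  assert (E : Nran x (Ndom x (i a ⋅ (i a)⁻) ⋅ (Ndom x (i a ⋅ (i a)⁻))⁻)
              = Ndom x (i a ⋅ (i a)⁻)).
  { rewrite <- (j_Ndom HE) at 1. rewrite Nran_of. apply (N_Ndom HE). }
  rewrite E, theta_i.
  arewrite (Ndom_linv HE). arewrite (Ndom_linv HE). arewrite (sinv_l (i a)).
  arewrite (inA_mul_rinv (inA_i a)). reflexivity.
Qed.

Lemma theta_one a : th 1 a = a.
Proof.
  apply Hi_inj. rewrite theta_i.
  assert (E : Ndom 1 (i a ⋅ (i a)⁻) = i a ⋅ (i a)⁻).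
  { rewrite <- (N_idem (rinv_idem (i a))) at 2. apply Ndom_eq.
    - apply inA_idem, rinv_idem.
    - rewrite (sinv_idem (rinv_idem (i a))). apply rinv_idem. }
  rewrite E, (sinv_idem (rinv_idem (i a))). arewrite (sinv_l (i a)).
  arewrite (inA_mul_rinv (inA_i a)). reflexivity.
Qed.

Lemma theta_mul x a b : Dset (ginv x) a -> Dset (ginv x) b ->
  th x (a ⋅ b) = th x a ⋅ th x b.
Proof.
  intros Ha Hb. apply Dset_ginv in Ha, Hb.
  set (ea := i a ⋅ (i a)⁻) in *. set (eb := i b ⋅ (i b)⁻) in *.
  assert (Hea : ea ⋅ ea = ea) by apply rinv_idem.
  assert (Heb : eb ⋅ eb = eb) by apply rinv_idem.
  assert (HPa : Ndom x (ea ⋅ eb) = Ndom x ea ⋅ eb) by (apply Ndom_idem_mulr; assumption).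
  assert (HPb : Ndom x (ea ⋅ eb) = Ndom x eb ⋅ ea)
    by (rewrite (idem_comm Hea Heb); apply Ndom_idem_mulr; assumption).
  assert (HPaPb : (Ndom x ea)⁻ ⋅ Ndom x eb = ea ⋅ eb).
  { assert (Hin : inA ((Ndom x ea)⁻ ⋅ Ndom x eb))
      by (unfold inA; rewrite Hj, j_sinv, (j_Ndom Ha), (j_Ndom Hb), gmul_Vl; reflexivity).
    rewrite <- (Dom_mul_sinvNdom Ha), <- (Ndom_mul_Dom Hb).
    transitivity (ea ⋅ ((Ndom x ea)⁻ ⋅ Ndom x eb) ⋅ eb); [areflexivity|].
    rewrite (inA_central Hin Hea). arewrite (eq_trans (eq_sym HPb) HPa).
    arewrite (Ndom_linv Ha). arewrite Heb. reflexivity. }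
  apply Hi_inj. rewrite Hi, !theta_i, Hi, rinv_mul_inA by apply inA_i.
  fold ea eb. rewrite (idem_comm Heb Hea). rewrite HPa at 1. rewrite HPb.
  rewrite sinvM, (sinv_idem Hea). arewrite HPaPb. unfold ea, eb.
  arewrite (inA_mul_rinv (inA_i a)). arewrite (sinv_l (i b)).
  arewrite (inA_central (inA_i a) (rinv_idem (i b))). arewrite (sinv_l (i b)).
  arewrite (eq_sym (inA_central (inA_i b) (rinv_idem (i a)))). arewrite (inA_mul_rinv (inA_i a)).
  reflexivity.
Qed.

Lemma theta_image x y : set_eq
  (fun c => exists a, setprod (Dset (ginv x)) (Dset y) a /\ c = th x a)
  (setprod (Dset x) (Dset (x * y))).
Proof.
  intro c. rewrite setprod_Dset. split.
  - intros [a [Ha ->]]. apply setprod_Dset in Ha as [Hx Hy].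
    split; [apply theta_Dset, Hx|].
    pose proof (proj1 (Dset_ginv x a) Hx) as HE.
    unfold Dset. rewrite (theta_rinv Hx). destruct Hy as [w [Hw1 Hw2]].
    exists (Ndom x (i a ⋅ (i a)⁻) ⋅ w). split.
    + rewrite Hj, (j_Ndom HE), Hw1. reflexivity.
    + rewrite sinvM. arewrite Hw2. arewrite (Ndom_mul_Dom HE). reflexivity.
  - intros [Hx Hxy]. exists (thinv x c). split; [|symmetry; apply theta_thetainv, Hx].
    apply setprod_Dset. split; [apply thetainv_Dset, Hx|].
    unfold Dset. rewrite (thetainv_rinv Hx). destruct Hxy as [w [Hw1 Hw2]].
    exists ((Nran x (i c ⋅ (i c)⁻))⁻ ⋅ w). split.
    + rewrite Hj, j_sinv, (j_Nran Hx), Hw1, gmul_assoc, gmul_Vl, gmul_1l. reflexivity.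
    + rewrite sinvM, sinvK. arewrite Hw2. arewrite (sinvNran_mul_Ran Hx). reflexivity.
Qed.

(** * Multipliers and the twisting *)

Section Multipliers.
Variables (I : A -> Prop) (EI : U -> Prop).
Hypothesis HI : forall c, I c <-> EI (i c ⋅ (i c)⁻).
Hypothesis HEI : forall e f, EI e -> f ⋅ f = f -> EI (f ⋅ e).

(* Such a family acts on the ideal [I] by the unit multiplier
   [c ↦ K (c c⁻) c], [c ↦ c K (c c⁻)]; the twisting is of this form. *)
Definition compatible_section (K : U -> U) : Prop :=
  forall e, EI e ->
    inA (K e) /\ K e ⋅ (K e)⁻ = e /\ forall f, f ⋅ f = f -> K (f ⋅ e) = f ⋅ K e.

Definition mulL (K : U -> U) (c : A) : A := iinv (K (i c ⋅ (i c)⁻) ⋅ i c).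
Definition mulR (K : U -> U) (c : A) : A := iinv (i c ⋅ K (i c ⋅ (i c)⁻)).

Section CompatibleSection.
Variable K : U -> U.
Hypothesis HK : compatible_section K.

Lemma mulL_i c : I c -> i (mulL K c) = K (i c ⋅ (i c)⁻) ⋅ i c.
Proof. intro Hc. apply iinvK, inA_mul; [apply HK, HI, Hc | apply inA_i]. Qed.

Lemma mulR_i c : I c -> i (mulR K c) = i c ⋅ K (i c ⋅ (i c)⁻).
Proof. intro Hc. apply iinvK, inA_mul; [apply inA_i | apply HK, HI, Hc]. Qed.

Lemma mulL_rinv c : I c -> i (mulL K c) ⋅ (i (mulL K c))⁻ = i c ⋅ (i c)⁻.
Proof.
  intro Hc. destruct (HK (proj1 (HI c) Hc)) as [HKA [HKr _]].
  rewrite (mulL_i Hc), sinvM. arewrite (eq_sym (inA_central HKA (rinv_idem (i c)))).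
  arewrite HKr. arewrite (rinv_idem (i c)). reflexivity.
Qed.

Lemma mulR_rinv c : I c -> i (mulR K c) ⋅ (i (mulR K c))⁻ = i c ⋅ (i c)⁻.
Proof.
  intro Hc. destruct (HK (proj1 (HI c) Hc)) as [_ [HKr _]].
  rewrite (mulR_i Hc), sinvM. arewrite HKr. arewrite (inA_mul_rinv (inA_i c)).
  reflexivity.
Qed.

Lemma mulL_I c : I c -> I (mulL K c).
Proof. intro Hc. apply HI. rewrite (mulL_rinv Hc). apply HI, Hc. Qed.

Lemma mulR_I c : I c -> I (mulR K c).
Proof. intro Hc. apply HI. rewrite (mulR_rinv Hc). apply HI, Hc. Qed.

Lemma mul_is_multiplier : is_multiplier I (mulL K) (mulR K).
Proof.
  split; [intros c Hc; split; [apply mulL_I | apply mulR_I]; exact Hc|].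
  intros s t Hs Ht.
  pose proof (proj1 (HI s) Hs) as Es. pose proof (proj1 (HI t) Ht) as Et.
  assert (Hst : I (s ⋅ t)).
  { apply HI. rewrite Hi, rinv_mul_inA by apply inA_i. apply HEI; [exact Es | apply rinv_idem]. }
  destruct (HK Es) as [HKs [_ HKs_mul]]. destruct (HK Et) as [_ [_ HKt_mul]].
  assert (Kts : K (i t ⋅ (i t)⁻ ⋅ (i s ⋅ (i s)⁻)) =
                i t ⋅ (i t)⁻ ⋅ K (i s ⋅ (i s)⁻))
    by (apply HKs_mul, rinv_idem).
  assert (Kst : K (i s ⋅ (i s)⁻ ⋅ (i t ⋅ (i t)⁻)) =
                i s ⋅ (i s)⁻ ⋅ K (i t ⋅ (i t)⁻))
    by (apply HKt_mul, rinv_idem).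
  assert (Cst : i t ⋅ (i t)⁻ ⋅ (i s ⋅ (i s)⁻) = i s ⋅ (i s)⁻ ⋅ (i t ⋅ (i t)⁻))
    by (apply idem_comm; apply rinv_idem).
  split; [|split]; apply Hi_inj.
  - rewrite (mulL_i Hst), !Hi, (mulL_i Hs), rinv_mul_inA by apply inA_i.
    rewrite Kts. arewrite (inA_central HKs (rinv_idem (i t))).
    arewrite (inA_central (inA_i s) (rinv_idem (i t))). arewrite (sinv_l (i t)).
    reflexivity.
  - rewrite (mulR_i Hst), !Hi, (mulR_i Ht), rinv_mul_inA by apply inA_i.
    rewrite Cst, Kst.
    arewrite (eq_sym (inA_central (inA_i t) (rinv_idem (i s)))).
    arewrite (inA_mul_rinv (inA_i s)). reflexivity.
  - rewrite !Hi, (mulL_i Ht), (mulR_i Hs).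
    transitivity (i s ⋅ (i s ⋅ (i s)⁻ ⋅ K (i t ⋅ (i t)⁻)) ⋅ i t);
      [arewrite (inA_mul_rinv (inA_i s)); reflexivity|].
    rewrite <- Kst, <- Cst, Kts.
    arewrite (inA_central HKs (rinv_idem (i t))). arewrite (sinv_l (i t)). reflexivity.
Qed.

Lemma compatible_section_sinv : compatible_section (fun e => (K e)⁻).
Proof.
  intros e He. destruct (HK He) as [HKA [HKr HKmul]]. split; [|split].
  - apply inA_sinv, HKA.
  - rewrite sinvK, <- (inA_rinv_linv HKA). exact HKr.
  - intros f Hf. rewrite HKmul, sinvM, (sinv_idem Hf) by exact Hf.
    symmetry. apply inA_central; [apply inA_sinv, HKA | exact Hf].
Qed.

End CompatibleSection.

Lemma mul_is_unit_multiplier K : compatible_section K ->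
  is_unit_multiplier I (mulL K) (mulR K) (mulL (fun e => (K e)⁻)) (mulR (fun e => (K e)⁻)).
Proof.
  intro HK. pose proof (compatible_section_sinv HK) as HK'.
  split; [apply (mul_is_multiplier HK)|]. split; [apply (mul_is_multiplier HK')|].
  intros s Hs. destruct (HK _ (proj1 (HI s) Hs)) as [HKA [HKr _]].
  split; [|split; [|split]]; apply Hi_inj.
  - rewrite (mulL_i HK (mulL_I HK' Hs)), (mulL_rinv HK' Hs), (mulL_i HK' Hs).
    arewrite HKr. arewrite (sinv_l (i s)). reflexivity.
  - rewrite (mulR_i HK' (mulR_I HK Hs)), (mulR_rinv HK Hs), (mulR_i HK Hs).
    arewrite HKr. arewrite (inA_mul_rinv (inA_i s)). reflexivity.
  - rewrite (mulL_i HK' (mulL_I HK Hs)), (mulL_rinv HK Hs), (mulL_i HK Hs).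
    arewrite (eq_sym (inA_rinv_linv HKA)). arewrite HKr. arewrite (sinv_l (i s)).
    reflexivity.
  - rewrite (mulR_i HK (mulR_I HK' Hs)), (mulR_rinv HK' Hs), (mulR_i HK' Hs).
    arewrite (eq_sym (inA_rinv_linv HKA)). arewrite HKr.
    arewrite (inA_mul_rinv (inA_i s)). reflexivity.
Qed.

End Multipliers.

(* [w_{x,y}] at the range [e] measures how far the product of the canonical
   elements over [x] and over [y] is from the canonical element over [x y]. *)
Definition twist (x y : G) (e : U) : U :=
  Nran x e ⋅ Nran y ((Nran x e)⁻ ⋅ Nran x e) ⋅ (Nran (x * y) e)⁻.

Section TwistFacts.
Variables (x y : G) (e : U).
Hypothesis Hx : Ran x e.
Hypothesis Hxy : Ran (x * y) e.

Local Notation P := (Nran x e).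
Local Notation Q := (Nran y (P⁻ ⋅ P)).

Lemma Ran_twist_mid : Ran y (P⁻ ⋅ P).
Proof.
  destruct Hxy as [w [Hw1 Hw2]]. exists (P⁻ ⋅ w). split.
  - rewrite Hj, j_sinv, (j_Nran Hx), Hw1, gmul_assoc, gmul_Vl, gmul_1l. reflexivity.
  - rewrite sinvM, sinvK. arewrite Hw2. arewrite (sinvNran_mul_Ran Hx). reflexivity.
Qed.

Lemma Nran_mul_eq : Nran (x * y) e = N (P ⋅ Q).
Proof.
  apply Nran_eq.
  - rewrite Hj, (j_Nran Hx), (j_Nran Ran_twist_mid). reflexivity.
  - rewrite sinvM. arewrite (Nran_rinv Ran_twist_mid). arewrite (sinv_l P).
    apply (Nran_rinv Hx).
Qed.

Lemma Nran_mul_linv : (Nran (x * y) e)⁻ ⋅ Nran (x * y) e = Q⁻ ⋅ Q.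
Proof.
  rewrite Nran_mul_eq, N_linv, sinvM. arewrite (sinvNran_mul_Ran Ran_twist_mid).
  reflexivity.
Qed.

Lemma twist_inA : inA (twist x y e).
Proof.
  unfold inA, twist.
  rewrite !Hj, j_sinv, (j_Nran Hx), (j_Nran Ran_twist_mid), (j_Nran Hxy), gmul_Vr.
  reflexivity.
Qed.

Lemma twist_rinv : twist x y e ⋅ (twist x y e)⁻ = e.
Proof.
  unfold twist. rewrite Nran_mul_eq, !sinvM, sinvK.
  arewrite (N_linv (P ⋅ Q)). rewrite sinvM.
  arewrite (sinvNran_mul_Ran Ran_twist_mid). arewrite (sinv_l Q).
  arewrite (Nran_rinv Ran_twist_mid). arewrite (sinv_l P). apply (Nran_rinv Hx).
Qed.

Lemma twist_idem_mull f : f ⋅ f = f -> twist x y (f ⋅ e) = f ⋅ twist x y e.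
Proof.
  intro Hf. unfold twist. rewrite (Nran_idem_mull Hx Hf), (Nran_idem_mull Hxy Hf).
  assert (Eq : Nran y ((f ⋅ P)⁻ ⋅ (f ⋅ P)) = P⁻ ⋅ f ⋅ P ⋅ Q).
  { assert (E : (f ⋅ P)⁻ ⋅ (f ⋅ P) = P⁻ ⋅ f ⋅ P ⋅ (P⁻ ⋅ P)).
    { rewrite sinvM, (sinv_idem Hf). arewrite Hf. arewrite (sinv_l P). reflexivity. }
    rewrite E. apply Nran_idem_mull; [exact Ran_twist_mid|].
    pose proof (conj_idem P⁻ Hf) as C. rewrite sinvK in C. exact C. }
  rewrite Eq, sinvM, (sinv_idem Hf).
  arewrite (Nran_rinv Hx). arewrite (idem_comm (Ran_idem Hx) Hf). arewrite Hf.
  arewrite (Ran_mul_Nran Hx).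
  pose proof (inA_central twist_inA Hf) as C. unfold twist in C.
  transitivity (f ⋅ (P ⋅ Q ⋅ (Nran (x * y) e)⁻ ⋅ f)); [areflexivity|].
  rewrite <- C. arewrite Hf. reflexivity.
Qed.

End TwistFacts.

Lemma twist_of u v x y e : j u = x -> j v = y -> u⁻ ⋅ u = v ⋅ v⁻ -> u ⋅ u⁻ = e ->
  twist x y e = N u ⋅ N v ⋅ (N (u ⋅ v))⁻.
Proof.
  intros Hu Hv Huv Hue. unfold twist.
  assert (Pu : Nran x e = N u) by (apply Nran_eq; assumption).
  assert (Qv : Nran y ((N u)⁻ ⋅ N u) = N v)
    by (apply Nran_eq; [exact Hv | rewrite N_linv; symmetry; exact Huv]).
  assert (Ruv : Nran (x * y) e = N (u ⋅ v)).
  { apply Nran_eq; [rewrite Hj, Hu, Hv; reflexivity|].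
    rewrite sinvM, <- Hue. arewrite (eq_sym Huv). arewrite (sinv_l u). reflexivity. }
  rewrite Pu, Qv, Ruv. reflexivity.
Qed.

Definition twist_dom (x y : G) (e : U) : Prop := Ran x e /\ Ran (x * y) e.

Lemma setprod_Dset_twist_dom x y c :
  setprod (Dset x) (Dset (x * y)) c <-> twist_dom x y (i c ⋅ (i c)⁻).
Proof. rewrite setprod_Dset. reflexivity. Qed.

Lemma twist_dom_idem_mull x y e f : twist_dom x y e -> f ⋅ f = f -> twist_dom x y (f ⋅ e).
Proof. intros [Hx Hxy] Hf. split; apply Ran_idem_mull; assumption. Qed.

Lemma twist_compatible x y : compatible_section (twist_dom x y) (twist x y).
Proof.
  intros e [Hx Hxy]. split; [apply twist_inA; assumption|].
  split; [apply twist_rinv; assumption|]. intros f Hf. apply twist_idem_mull; assumption.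
Qed.

Definition twL x y := mulL (twist x y).
Definition twR x y := mulR (twist x y).
Definition twiL x y := mulL (fun e => (twist x y e)⁻).
Definition twiR x y := mulR (fun e => (twist x y e)⁻).

Lemma tw_unit x y :
  is_unit_multiplier (setprod (Dset x) (Dset (x * y))) (twL x y) (twR x y) (twiL x y) (twiR x y).
Proof.
  apply mul_is_unit_multiplier with (EI := twist_dom x y).
  - apply setprod_Dset_twist_dom.
  - apply twist_dom_idem_mull.
  - apply twist_compatible.
Qed.

Lemma twR_i x y c : setprod (Dset x) (Dset (x * y)) c ->
  i (twR x y c) = i c ⋅ twist x y (i c ⋅ (i c)⁻).
Proof. apply (mulR_i (@setprod_Dset_twist_dom x y) (@twist_compatible x y)). Qed.

Lemma twR_rinv x y c : setprod (Dset x) (Dset (x * y)) c ->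
  i (twR x y c) ⋅ (i (twR x y c))⁻ = i c ⋅ (i c)⁻.
Proof. apply (mulR_rinv (@setprod_Dset_twist_dom x y) (@twist_compatible x y)). Qed.

Lemma tw_1x x a : Dset x a -> twL 1 x a = a /\ twR 1 x a = a.
Proof.
  intro Ha.
  assert (E : twist 1 x (i a ⋅ (i a)⁻) = i a ⋅ (i a)⁻).
  { unfold twist. rewrite (Nran_one (rinv_idem (i a))), (sinv_idem (rinv_idem (i a))).
    rewrite (rinv_idem (i a)), gmul_1l. arewrite (Ran_mul_Nran Ha). apply (Nran_rinv Ha). }
  unfold twL, twR, mulL, mulR. rewrite E. arewrite (sinv_l (i a)).
  arewrite (inA_mul_rinv (inA_i a)). rewrite iinv_i. split; reflexivity.
Qed.

Lemma tw_x1 x a : Dset x a -> twL x 1 a = a /\ twR x 1 a = a.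
Proof.
  intro Ha.
  assert (E : twist x 1 (i a ⋅ (i a)⁻) = i a ⋅ (i a)⁻).
  { unfold twist. rewrite (Nran_one (linv_idem (Nran x (i a ⋅ (i a)⁻)))), gmul_1r.
    arewrite (sinv_l (Nran x (i a ⋅ (i a)⁻))). apply (Nran_rinv Ha). }
  unfold twL, twR, mulL, mulR. rewrite E. arewrite (sinv_l (i a)).
  arewrite (inA_mul_rinv (inA_i a)). rewrite iinv_i. split; reflexivity.
Qed.

Lemma twiR_twL_i x y c : setprod (Dset x) (Dset (x * y)) c ->
  i (twiR x y (twL x y c)) =
  twist x y (i c ⋅ (i c)⁻) ⋅ i c ⋅ (twist x y (i c ⋅ (i c)⁻))⁻.
Proof.
  intro Hc. pose proof (@setprod_Dset_twist_dom x y) as HI.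
  pose proof (@twist_compatible x y) as HK. pose proof (compatible_section_sinv HK) as HK'.
  unfold twiR, twL.
  rewrite (mulR_i HI HK' (mulL_I HI HK Hc)), (mulL_rinv HI HK Hc), (mulL_i HI HK Hc).
  reflexivity.
Qed.

Section ThetaComp.
Variables (x y : G) (s : A).
Hypothesis Hy : Dset (ginv y) s.
Hypothesis Hxy : Dset (ginv (x * y)) s.

Local Notation e := (i s ⋅ (i s)⁻).
Local Notation B := (Ndom y e).
Local Notation C := (Ndom (x * y) e).

Let HB : Dom y e := proj1 (Dset_ginv y s) Hy.
Let HC : Dom (x * y) e := proj1 (Dset_ginv (x * y) s) Hxy.

Lemma theta_comp_j : j (C ⋅ B⁻) = x.
Proof. rewrite Hj, j_sinv, (j_Ndom HC), (j_Ndom HB). apply gmulVKr. Qed.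

Lemma theta_comp_linv : (C ⋅ B⁻)⁻ ⋅ (C ⋅ B⁻) = B ⋅ B⁻.
Proof. rewrite sinvM, sinvK. arewrite (Ndom_linv HC). arewrite (Ndom_mul_Dom HB). reflexivity. Qed.

Lemma theta_comp_rinv : C ⋅ B⁻ ⋅ (C ⋅ B⁻)⁻ = C ⋅ C⁻.
Proof. rewrite sinvM, sinvK. arewrite (Ndom_linv HB). arewrite (Ndom_mul_Dom HC). reflexivity. Qed.

Lemma theta_comp_lhs :
  i (th x (th y s)) = N (C ⋅ B⁻) ⋅ (B ⋅ i s ⋅ B⁻) ⋅ (N (C ⋅ B⁻))⁻.
Proof.
  rewrite (theta_conj theta_comp_j); [rewrite theta_i; reflexivity|].
  rewrite (theta_rinv Hy). exact theta_comp_linv.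
Qed.

Lemma theta_comp_twist : twist x y (C ⋅ C⁻) = N (C ⋅ B⁻) ⋅ B ⋅ C⁻.
Proof.
  rewrite (twist_of (u := C ⋅ B⁻) (v := B)
            theta_comp_j (j_Ndom HB) theta_comp_linv theta_comp_rinv).
  rewrite (N_Ndom HB), <- (smul_assoc C B⁻ B), (Ndom_linv HB), (Ndom_mul_Dom HC), (N_Ndom HC).
  reflexivity.
Qed.

Lemma theta_comp_rhs :
  i (twiR x y (twL x y (th (x * y) s))) =
  N (C ⋅ B⁻) ⋅ (B ⋅ i s ⋅ B⁻) ⋅ (N (C ⋅ B⁻))⁻.
Proof.
  assert (Hc : setprod (Dset x) (Dset (x * y)) (th (x * y) s)).
  { apply setprod_Dset_twist_dom. rewrite (theta_rinv Hxy). split.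
    - rewrite <- theta_comp_rinv, <- theta_comp_j at 1. apply Ran_of.
    - rewrite <- (j_Ndom HC) at 1. apply Ran_of. }
  rewrite (twiR_twL_i Hc), (theta_rinv Hxy), theta_comp_twist, theta_i, !sinvM, !sinvK.
  arewrite (Ndom_linv HC). arewrite (Ndom_linv HC). arewrite (sinv_l (i s)).
  arewrite (inA_mul_rinv (inA_i s)). reflexivity.
Qed.

End ThetaComp.

Lemma theta_comp x y s : setprod (Dset (ginv y)) (Dset (ginv y * ginv x)) s ->
  th x (th y s) = twiR x y (twL x y (th (x * y) s)).
Proof.
  rewrite setprod_Dset, <- ginvM. intros [Hy Hxy]. apply Hi_inj.
  rewrite (theta_comp_lhs Hy Hxy), (theta_comp_rhs Hy Hxy). reflexivity.
Qed.

Section Cocycle.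
Variables (x y z : G) (s : A).
Hypothesis Hx : Dset (ginv x) s.
Hypothesis Hy : Dset y s.
Hypothesis Hyz : Dset (y * z) s.

Local Notation e := (i s ⋅ (i s)⁻).
Local Notation X := (Ndom x e).
Local Notation Y := (Nran y e).
Local Notation Z := (Nran z (Y⁻ ⋅ Y)).
Local Notation W := (Nran (y * z) e).
Local Notation f := (X ⋅ X⁻).
Local Notation T := (Nran (x * y * z) f).

Let HX : Dom x e := proj1 (Dset_ginv x s) Hx.

Lemma Ran_cocycle_x : Ran x f.
Proof. rewrite <- (j_Ndom HX) at 1. apply Ran_of. Qed.

Lemma Ran_cocycle_mul v w : j v = w -> v ⋅ v⁻ = e -> Ran (x * w) f.
Proof.
  intros Hv Hve. exists (X ⋅ v). split; [rewrite Hj, (j_Ndom HX), Hv; reflexivity|].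
  rewrite sinvM. arewrite Hve. arewrite (Ndom_mul_Dom HX). reflexivity.
Qed.

Lemma Nran_cocycle_x : Nran x f = X.
Proof.
  rewrite (Nran_eq (u := X)), (N_Ndom HX); [reflexivity | apply (j_Ndom HX) | reflexivity].
Qed.

Lemma Nran_cocycle_xy_linv : (Nran (x * y) f)⁻ ⋅ Nran (x * y) f = Y⁻ ⋅ Y.
Proof.
  pose proof (Ran_cocycle_mul (j_Nran Hy) (Nran_rinv Hy)) as Hxy.
  rewrite (Nran_mul_linv Ran_cocycle_x Hxy), Nran_cocycle_x, (Ndom_linv HX). reflexivity.
Qed.

Let Isyz : setprod (Dset y) (Dset (y * z)) s := proj2 (setprod_Dset y (y * z) s) (conj Hy Hyz).

Lemma cocycle_lhs :
  i (twR x (y * z) (th x (twR y z s))) = X ⋅ i s ⋅ Y ⋅ Z ⋅ T⁻.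
Proof.
  assert (Hw : Dset (ginv x) (twR y z s)) by (unfold Dset; rewrite (twR_rinv Isyz); exact Hx).
  assert (Hc : setprod (Dset x) (Dset (x * (y * z))) (th x (twR y z s))).
  { apply setprod_Dset_twist_dom. rewrite (theta_rinv Hw), (twR_rinv Isyz). split;
      [exact Ran_cocycle_x | exact (Ran_cocycle_mul (j_Nran Hyz) (Nran_rinv Hyz))]. }
  rewrite (twR_i Hc), (theta_rinv Hw), (twR_rinv Isyz), theta_i, (twR_rinv Isyz), (twR_i Isyz).
  unfold twist. rewrite Nran_cocycle_x, (Ndom_linv HX), <- gmul_assoc.
  arewrite (Ndom_linv HX). arewrite (sinvNran_mul_Ran Hyz). arewrite (Nran_mul_linv Hy Hyz).
  arewrite (sinv_l Z). reflexivity.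
Qed.

Lemma cocycle_rhs :
  i (twR (x * y) z (twR x y (th x s))) = X ⋅ i s ⋅ Y ⋅ Z ⋅ T⁻.
Proof.
  pose proof (Ran_cocycle_mul (j_Nran Hy) (Nran_rinv Hy)) as Hxy.
  assert (Hc : setprod (Dset x) (Dset (x * y)) (th x s)).
  { apply setprod_Dset_twist_dom. rewrite (theta_rinv Hx).
    split; [exact Ran_cocycle_x | exact Hxy]. }
  assert (Hc' : setprod (Dset (x * y)) (Dset (x * y * z)) (twR x y (th x s))).
  { apply setprod_Dset_twist_dom. rewrite (twR_rinv Hc), (theta_rinv Hx). split; [exact Hxy|].
    rewrite <- gmul_assoc. exact (Ran_cocycle_mul (j_Nran Hyz) (Nran_rinv Hyz)). }
  rewrite (twR_i Hc'), (twR_rinv Hc), (twR_i Hc), (theta_rinv Hx), theta_i.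
  unfold twist. rewrite Nran_cocycle_x, (Ndom_linv HX), Nran_cocycle_xy_linv.
  arewrite (Ndom_linv HX). arewrite (inA_mul_rinv (inA_i s)).
  arewrite Nran_cocycle_xy_linv. arewrite (sinv_l Y). reflexivity.
Qed.

End Cocycle.

Lemma cocycle x y z s : setprod (setprod (Dset (ginv x)) (Dset y)) (Dset (y * z)) s ->
  twR x (y * z) (th x (twR y z s)) = twR (x * y) z (twR x y (th x s)).
Proof.
  rewrite setprod3_Dset. intros [Hx [Hy Hyz]]. apply Hi_inj.
  rewrite (cocycle_lhs Hx Hy Hyz), (cocycle_rhs Hx Hy Hyz). reflexivity.
Qed.

(** * The equivalence with the crossed product *)

(* The first component lies in [A] because [u] and [N u] lie over [j u]. *)
Definition mu (u : U) : A * G := (iinv (u ⋅ (N u)⁻), j u).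

Lemma mu_inA u : inA (u ⋅ (N u)⁻).
Proof. unfold inA. rewrite Hj, j_sinv, j_N, gmul_Vr. reflexivity. Qed.

Lemma i_fst_mu u : i (fst (mu u)) = u ⋅ (N u)⁻.
Proof. apply iinvK, mu_inA. Qed.

Lemma mu_rinv u : u ⋅ (N u)⁻ ⋅ (u ⋅ (N u)⁻)⁻ = u ⋅ u⁻.
Proof. rewrite sinvM, sinvK. arewrite (N_linv u). arewrite (sinv_l u). reflexivity. Qed.

Lemma mu_mul_N u : u ⋅ (N u)⁻ ⋅ N u = u.
Proof. arewrite (N_linv u). apply sinv_l. Qed.

Lemma mu_Dset u : Dset (snd (mu u)) (fst (mu u)).
Proof. unfold Dset. rewrite i_fst_mu, mu_rinv. apply Ran_of. Qed.

Lemma mu_inj : injective mu.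
Proof.
  intros u v Huv. injection Huv as Ha Hx.
  assert (E : u ⋅ (N u)⁻ = v ⋅ (N v)⁻).
  { rewrite <- (iinvK (mu_inA u)), <- (iinvK (mu_inA v)), Ha. reflexivity. }
  assert (R : u ⋅ u⁻ = v ⋅ v⁻) by (rewrite <- mu_rinv, E, mu_rinv; reflexivity).
  rewrite <- (mu_mul_N u), <- (mu_mul_N v), E, (N_eq_of_rinv Hx R). reflexivity.
Qed.

Lemma mu_surj a x : Dset x a -> mu (i a ⋅ Nran x (i a ⋅ (i a)⁻)) = (a, x).
Proof.
  intro Ha. unfold mu.
  assert (J : j (i a ⋅ Nran x (i a ⋅ (i a)⁻)) = x)
    by (rewrite Hj, (inA_i a), (j_Nran Ha), gmul_1l; reflexivity).
  assert (E : N (i a ⋅ Nran x (i a ⋅ (i a)⁻)) = Nran x (i a ⋅ (i a)⁻)).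
  { symmetry. apply Nran_eq; [exact J|].
    rewrite sinvM. arewrite (Nran_rinv Ha). arewrite (inA_mul_rinv (inA_i a)). reflexivity. }
  rewrite J, E. arewrite (Nran_rinv Ha). arewrite (inA_mul_rinv (inA_i a)).
  rewrite iinv_i. reflexivity.
Qed.

Lemma mu_i a : mu (i a) = (a, 1).
Proof.
  unfold mu. rewrite (inA_i a).
  assert (E : N (i a) = i a ⋅ (i a)⁻).
  { rewrite <- (N_idem (rinv_idem (i a))). apply N_eq_of_rinv.
    - rewrite (inA_i a). symmetry. apply inA_idem, rinv_idem.
    - rewrite (sinv_idem (rinv_idem (i a))), (rinv_idem (i a)). reflexivity. }
  rewrite E, (sinv_idem (rinv_idem (i a))). arewrite (inA_mul_rinv (inA_i a)).
  rewrite iinv_i. reflexivity.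
Qed.

Section MuMul.
Variables u v : U.

Local Notation a := (fst (mu u)).
Local Notation b := (fst (mu v)).
Local Notation X := ((N u)⁻ ⋅ u ⋅ (v ⋅ (N v)⁻)).

Lemma thetainv_mu : i (thinv (j u) a) = (N u)⁻ ⋅ u.
Proof.
  rewrite thetainv_i, !i_fst_mu, mu_rinv, Nran_of. arewrite (N_linv u). arewrite (sinv_l u).
  reflexivity.
Qed.

Lemma theta_mu : i (th (j u) (thinv (j u) a ⋅ b)) = u ⋅ v ⋅ (N v)⁻ ⋅ (N u)⁻.
Proof.
  assert (IX : i (thinv (j u) a ⋅ b) = X) by (rewrite Hi, thetainv_mu, i_fst_mu; reflexivity).
  assert (XinA : inA X) by (rewrite <- IX; apply inA_i).
  assert (HNX : Ndom (j u) (X ⋅ X⁻) = N u ⋅ (X ⋅ X⁻)).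
  { assert (E : X ⋅ X⁻ = u⁻ ⋅ u ⋅ (X ⋅ X⁻))
      by (rewrite !sinvM, !sinvK; arewrite (linv_mul_sinvN u); reflexivity).
    rewrite E at 1. rewrite (Ndom_idem_mulr (Dom_of u) (rinv_idem X)), Ndom_of.
    reflexivity. }
  rewrite theta_i, IX, HNX, (sinvM (N u) (X ⋅ X⁻)), (sinv_idem (rinv_idem X)).
  arewrite (sinv_l X). arewrite (inA_mul_rinv XinA). arewrite (N_rinv u). arewrite (sinv_l u).
  reflexivity.
Qed.

Lemma mu_comm_linv p : p ⋅ v ⋅ (N v)⁻ ⋅ u⁻ ⋅ u = p ⋅ (u⁻ ⋅ u) ⋅ v ⋅ (N v)⁻.
Proof.
  transitivity (p ⋅ (v ⋅ (N v)⁻ ⋅ (u⁻ ⋅ u))); [areflexivity|].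
  rewrite <- (inA_central (mu_inA v) (linv_idem u)). areflexivity.
Qed.

Lemma theta_mu_rinv :
  i (th (j u) (thinv (j u) a ⋅ b)) ⋅ (i (th (j u) (thinv (j u) a ⋅ b)))⁻ =
  u ⋅ v ⋅ (u ⋅ v)⁻.
Proof.
  rewrite theta_mu, !sinvM, !sinvK. arewrite (N_linv u). rewrite mu_comm_linv.
  arewrite (sinv_l u). arewrite (N_linv v). arewrite (sinv_l v). reflexivity.
Qed.

Lemma twist_mu : twist (j u) (j v) (u ⋅ v ⋅ (u ⋅ v)⁻) =
  N u ⋅ (v ⋅ v⁻) ⋅ (u⁻ ⋅ u ⋅ N v) ⋅ (N (u ⋅ v))⁻.
Proof.
  assert (Hc : u⁻ ⋅ u ⋅ (v ⋅ v⁻) = v ⋅ v⁻ ⋅ (u⁻ ⋅ u))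
    by (apply idem_comm; [apply linv_idem | apply rinv_idem]).
  assert (Huv : u ⋅ (v ⋅ v⁻) ⋅ (u⁻ ⋅ u ⋅ v) = u ⋅ v).
  { transitivity (u ⋅ (v ⋅ v⁻ ⋅ (u⁻ ⋅ u)) ⋅ v); [areflexivity|].
    rewrite <- Hc. arewrite (sinv_l u). arewrite (sinv_l v). reflexivity. }
  rewrite (twist_of (u := u ⋅ (v ⋅ v⁻)) (v := u⁻ ⋅ u ⋅ v)).
  - rewrite Huv, (N_idem_mulr _ (rinv_idem v)), (N_idem_mull _ (linv_idem u)). reflexivity.
  - rewrite Hj, (inA_idem (rinv_idem v)), gmul_1r. reflexivity.
  - rewrite Hj, (inA_idem (linv_idem u)), gmul_1l. reflexivity.
  - rewrite !sinvM, !sinvK.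
    transitivity (v ⋅ v⁻ ⋅ (u⁻ ⋅ u) ⋅ (v ⋅ v⁻)); [areflexivity|].
    transitivity (u⁻ ⋅ u ⋅ (v ⋅ v⁻) ⋅ (u⁻ ⋅ u)); [|areflexivity].
    rewrite <- Hc. arewrite (rinv_idem v). arewrite Hc. arewrite (linv_idem u). reflexivity.
  - rewrite !sinvM, !sinvK. arewrite (rinv_idem v). reflexivity.
Qed.

End MuMul.

Lemma mu_mul u v : fst (mu (u ⋅ v)) =
  twR (j u) (j v) (th (j u) (thinv (j u) (fst (mu u)) ⋅ fst (mu v))).
Proof.
  apply Hi_inj. rewrite i_fst_mu.
  assert (Hc : setprod (Dset (j u)) (Dset (j u * j v))
                 (th (j u) (thinv (j u) (fst (mu u)) ⋅ fst (mu v)))).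
  { apply setprod_Dset_twist_dom. rewrite theta_mu_rinv. split.
    - exists (u ⋅ (v ⋅ v⁻)).
      split; [rewrite Hj, (inA_idem (rinv_idem v)), gmul_1r; reflexivity|].
      rewrite !sinvM, !sinvK. arewrite (sinv_l v). reflexivity.
    - rewrite <- Hj. apply Ran_of. }
  rewrite (twR_i Hc), theta_mu_rinv, twist_mu, theta_mu.
  arewrite (N_linv u). rewrite mu_comm_linv. arewrite (sinv_l u).
  arewrite (sinvN_mul_rinv v). rewrite mu_comm_linv. arewrite (sinv_l u).
  arewrite (N_linv v). arewrite (sinv_l v). reflexivity.
Qed.

Definition Theta : TwistedPartialAction G A.
Proof.
  refine {| Defs.D := Dset; Defs.theta := th; Defs.thetainv := thinv;
            Defs.wL := twL; Defs.wR := twR; Defs.wiL := twiL; Defs.wiR := twiR |}.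
  - intro x. split; [apply Dset_nonempty|].
    intros a b Ha. split; [apply Dset_mulr | apply Dset_mull]; exact Ha.
  - intros x c. rewrite setprod_Dset. tauto.
  - intros x y c. rewrite !setprod_Dset. tauto.
  - exact Dset_one.
  - exact theta_one.
  - exact theta_Dset.
  - exact thetainv_Dset.
  - exact thetainv_theta.
  - exact theta_thetainv.
  - exact theta_mul.
  - exact theta_image.
  - exact tw_unit.
  - exact theta_comp.
  - exact tw_1x.
  - exact tw_x1.
  - exact cocycle.
Defined.

Lemma mu_equivalence : equivalent_to_crossed_product i j Theta.
Proof.
  exists mu. split; [exact mu_inj|]. split; [|split; [|split]].
  - intros [a x]. split.
    + intros [u <-]. apply mu_Dset.
    + intro Ha. exists (i a ⋅ Nran x (i a ⋅ (i a)⁻)). apply mu_surj, Ha.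
  - intros u v. apply injective_projections; [apply mu_mul | apply Hj].
  - exact mu_i.
  - reflexivity.
Qed.

End Extension.

Theorem theorem6p12 :
  forall (A U : InvSemigroup) (G : Group) (i : A -> U) (j : U -> G),
    semilattice_of_groups A ->
    is_group_extension i j ->
    admissible i j ->
    exists Th : TwistedPartialAction G A,
      equivalent_to_crossed_product i j Th.
Proof.
  intros A U G i j HA [[Hi Hi_inj] [[Hj Hj_surj] Hj_ker]]
    [S [pi [kappa [[_ [[Hpi [_ Hpi_sep]] Hpi_ker]]
                   [_ [Hj_pi [rho [Hrho_sec [Hrho_idem Hrho_le]]]]]]]]].
  assert (A_inhabited : inhabited A).
  { destruct (Hj_surj (gone G)) as [u Hu]. destruct (proj2 (Hj_ker u) Hu) as [a _].
    exact (inhabits a). }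
  eexists. exact (mu_equivalence HA A_inhabited Hi Hi_inj Hj Hj_surj Hj_ker
    Hpi Hpi_sep Hpi_ker Hj_pi Hrho_sec Hrho_idem Hrho_le).
Qed.
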